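(* Let $p(t)=1+\sum_{j=1}^K c_jt^j$ be a real polynomial with each $c_j\ge 0$, and suppose at least $k$ of the $c_j$ are positive. Let $m\ge 0$ be an integer and $F(t)=(1+t)^m$. Then $N(Fp)\ge m+1+k$.
   Context: $N(q)$ denotes the number of distinct monomials with nonzero coefficient in the polynomial $q$. *)

From mathcomp Require Import all_boot all_order all_algebra.
Set Implicit Arguments. Unset Strict Implicit. Unset Printing Implicit Defensive.
Import GRing.Theory Num.Theory.
Local Open Scope ring_scope.

Definition nmonomials (R : nzRingType) (q : {poly R}) : nat :=
  count (fun c : R => c != 0) (polyseq q).

From mathcomp Require Import all_boot all_order all_algebra.
Set Implicit Arguments. Unset Strict Implicit. Unset Printing Implicit Defensive.
Import GRing.Theory Num.Theory.
Local Open Scope ring_scope.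

(* If q has nonnegative coefficients, then so has (1 + t) q, and no monomial
   of q cancels in (1 + t) q, which moreover has the new top monomial
   t^(deg q + 1).  Hence each of the m factors 1 + t adds at least one
   monomial to p, which already has its constant term and at least k more. *)

Lemma nmonomials_iota (R : nzRingType) (q : {poly R}) (n : nat) :
  (size q <= n)%N -> nmonomials q = count (fun i => q`_i != 0) (iota 0 n).
Proof.
move=> le_qn; rewrite /nmonomials -{1}(mkseq_nth 0 q) /mkseq count_map.
rewrite -(subnKC le_qn) iotaD count_cat add0n.
rewrite (@eq_in_count _ _ pred0 (iota (size q) _)) ?count_pred0 ?addn0 //.
by move=> i; rewrite mem_iota => /andP[le_qi _] /=; rewrite nth_default ?eqxx.
Qed.

Lemma nmonomials_coef0 (R : nzRingType) (q : {poly R}) :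
  nmonomials q =
    ((q`_0 != 0)%R + count (fun j => (q`_j != 0)%R) (iota 1 (size q).-1))%N.
Proof.
have [->|q_neq0] := eqVneq q 0; first by rewrite /nmonomials polyseq0 /= eqxx.
have q_gt0 : (0 < size q)%N by rewrite size_poly_gt0.
by rewrite (nmonomials_iota (leqnn _)) -{1}(prednK q_gt0).
Qed.

Lemma size_1DX (R : nzSemiRingType) : size (1 + 'X : {poly R}) = 2.
Proof. by rewrite addrC -polyC1 size_XaddC. Qed.

Lemma coef_mul1DX (R : nzRingType) (q : {poly R}) (j : nat) :
  ((1 + 'X) * q)`_j = q`_j + (if j == 0%N then 0 else q`_j.-1).
Proof. by rewrite mulrDl mul1r coefD coefXM. Qed.

Section MulOnePlusX.

Variable R : numDomainType.

Definition coef_nonneg (q : {poly R}) := forall j, 0 <= q`_j.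

Lemma coef_nonneg_mul1DX (q : {poly R}) :
  coef_nonneg q -> coef_nonneg ((1 + 'X) * q).
Proof.
by move=> q_ge0 j; rewrite coef_mul1DX; case: eqP; rewrite ?addr0 // addr_ge0.
Qed.

Lemma coef_nonneg_mul1DXn (q : {poly R}) (m : nat) :
  coef_nonneg q -> coef_nonneg ((1 + 'X) ^+ m * q).
Proof.
move=> q_ge0; elim: m => [|m IHm]; first by rewrite mul1r.
by rewrite exprS -mulrA; apply: coef_nonneg_mul1DX.
Qed.

Lemma nmonomials_mul1DX (q : {poly R}) :
  coef_nonneg q -> q != 0 ->
  ((nmonomials q).+1 <= nmonomials ((1 + 'X) * q))%N.
Proof.
move=> q_ge0 q_neq0.
have size_q1X : (size ((1 + 'X) * q)%R <= (size q).+1)%N.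
  by rewrite (leq_trans (size_polyMleq _ _)) // size_1DX.
rewrite (nmonomials_iota (leqnn _)) (nmonomials_iota size_q1X).
rewrite -[(size q).+1]addn1 iotaD count_cat add0n /= addn0 -addn1 leq_add //.
  apply: sub_count => i /= qi_neq0; rewrite coef_mul1DX lt0r_neq0 //.
  by apply: ltr_wpDr; [case: eqP | rewrite lt0r qi_neq0 q_ge0].
have q_gt0 : (0 < size q)%N by rewrite size_poly_gt0.
rewrite coef_mul1DX nth_default // add0r eqn0Ngt q_gt0 /=.
by rewrite -lead_coefE lead_coef_eq0 q_neq0.
Qed.

Lemma nmonomials_mul1DXn (q : {poly R}) (m : nat) :
  coef_nonneg q -> q != 0 ->
  (nmonomials q + m <= nmonomials ((1 + 'X) ^+ m * q))%N.
Proof.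
move=> q_ge0 q_neq0; elim: m => [|m IHm]; first by rewrite addn0 mul1r.
rewrite addnS exprS -mulrA (leq_ltn_trans IHm) // nmonomials_mul1DX //.
  exact: coef_nonneg_mul1DXn.
by rewrite mulf_neq0 // expf_neq0 // -size_poly_eq0 size_1DX.
Qed.

End MulOnePlusX.

Theorem proposition2p4 (R : realFieldType) (p : {poly R}) (k m : nat) :
  p`_0 = 1 ->
  (forall j : nat, 0 <= p`_j) ->
  (k <= count (fun j : nat => (0 < p`_j)%R) (iota 1%N (size p).-1))%N ->
  (m.+1 + k <= nmonomials ((1 + 'X) ^+ m * p))%N.
Proof.
move=> p0 p_ge0 k_le_count.
have p_neq0 : p != 0 by apply: contra_eq_neq p0 => ->; rewrite coef0 eq_sym oner_eq0.
have k_lt_nmon : (k < nmonomials p)%N.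
  rewrite nmonomials_coef0 p0 oner_neq0 add1n ltnS (leq_trans k_le_count) //.
  by apply: sub_count => j /= /lt0r_neq0.
apply: leq_trans (nmonomials_mul1DXn m p_ge0 p_neq0).
by rewrite addSn addnC ltn_add2r.
Qed.
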